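(* Let $L$ be a positive integer and let $X$ and $X_{\mathcal{K}}$, $\mathcal{K}\subseteq\mathcal{I}_L$, be jointly distributed random variables on finite sets with an arbitrary fixed joint distribution. Then the rate region $\{(R_1,\dots,R_L)\in\mathbb{R}^L: R_{\mathcal{K}}\ge\psi(\mathcal{K})\text{ for all }\emptyset\subset\mathcal{K}\subseteq\mathcal{I}_L\}$ is a contra-polymatroid.
   Context: $\mathcal{I}_L=\{1,\dots,L\}$. For a set $\mathcal{A}$, $2^{\mathcal{A}}$ is its power set; for a collection of sets $\mathcal{B}$, $X_{(\mathcal{B})}=\{X_{\mathcal{A}}:\mathcal{A}\in\mathcal{B}\}$ (so $X_{(\emptyset)}$ is a constant, while $X_{\emptyset}$ is the random variable indexed by the empty set). $R_{\mathcal{K}}=\sum_{k\in\mathcal{K}}R_k$. The set function $\psi$ on $2^{\mathcal{I}_L}$ is $\psi(\mathcal{K})=(|\mathcal{K}|-1)I(X;X_{\emptyset})-H(X_{(2^{\mathcal{K}})}|X)+\sum_{\mathcal{A}\subseteq\mathcal{K}}H(X_{\mathcal{A}}|X_{(2^{\mathcal{A}}-\{\mathcal{A}\})})$. A contra-polymatroid (in the sense of Edmonds) is a set of the form $\{(R_1,\dots,R_L): R_{\mathcal{K}}\ge g(\mathcal{K})\ \forall\,\emptyset\subset\mathcal{K}\subseteq\mathcal{I}_L\}$ where $g:2^{\mathcal{I}_L}\to\mathbb{R}$ satisfies $g(\emptyset)=0$, $g(\mathcal{S})\le g(\mathcal{T})$ whenever $\mathcal{S}\subset\mathcal{T}$,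 and $g(\mathcal{S})+g(\mathcal{T})\le g(\mathcal{S}\cup\mathcal{T})+g(\mathcal{S}\cap\mathcal{T})$ for all $\mathcal{S},\mathcal{T}$. *)

From HB Require Import structures.
From mathcomp Require Import all_boot all_order all_algebra.
From mathcomp Require Import reals exp.
Set Implicit Arguments. Unset Strict Implicit. Unset Printing Implicit Defensive.
Import Order.TTheory GRing.Theory Num.Theory.
Local Open Scope ring_scope.

(* Random variables on finite sets with an arbitrary joint distribution are
   modelled as functions on a common finite sample space [Omega] carrying a
   probability mass function [P].  A (joint) random variable is identified,
   for entropy purposes, through the boolean relation "takes the same value". *)
Section Info.
Variables (R : realType) (Omega : finType) (P : Omega -> R).

Definition ent (e : rel Omega) : R :=
  - \sum_(w : Omega) P w * ln (\sum_(w' : Omega | e w w') P w').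

Definition rv_rel (T : eqType) (Y : Omega -> T) : rel Omega :=
  fun w w' => Y w == Y w'.

Definition joint_rel (e1 e2 : rel Omega) : rel Omega :=
  fun w w' => e1 w w' && e2 w w'.

Definition cond_ent (e1 e2 : rel Omega) : R := ent (joint_rel e1 e2) - ent e2.

Definition mutinf (e1 e2 : rel Omega) : R :=
  ent e1 + ent e2 - ent (joint_rel e1 e2).

Variables (L : nat) (A : finType) (B : {set 'I_L} -> finType).
Variables (X : Omega -> A) (Xs : forall K : {set 'I_L}, Omega -> B K).

(* X_(C) = { X_K : K in C } for a collection C of subsets of I_L;
   X_(emptyset) is a constant (the relation is always true). *)
Definition coll_rel (C : {set {set 'I_L}}) : rel Omega :=
  fun w w' => [forall K in C, Xs K w == Xs K w'].

Definition psi (K : {set 'I_L}) : R :=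
  (#|K|%:R - 1) * mutinf (rv_rel X) (rv_rel (Xs set0))
  - cond_ent (coll_rel (powerset K)) (rv_rel X)
  + \sum_(S in powerset K) cond_ent (rv_rel (Xs S)) (coll_rel (powerset S :\ S)).

End Info.

Definition rate_sum (R : realType) (L : nat) (r : 'I_L -> R) (K : {set 'I_L}) : R :=
  \sum_(k in K) r k.

Definition contra_polymatroid (R : realType) (L : nat) (Reg : ('I_L -> R) -> Prop) : Prop :=
  exists g : {set 'I_L} -> R,
    [/\ g set0 = 0,
        (forall S T : {set 'I_L}, S \proper T -> g S <= g T),
        (forall S T : {set 'I_L}, g S + g T <= g (S :|: T) + g (S :&: T)) &
        (forall r : 'I_L -> R,
           Reg r <-> (forall K : {set 'I_L}, K != set0 -> g K <= rate_sum r K))].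

From HB Require Import structures.
From mathcomp Require Import all_boot all_order all_algebra.
From mathcomp Require Import reals exp.
From mathcomp Require Import lra ring.
Import Order.TTheory GRing.Theory Num.Theory.
Local Open Scope ring_scope.
Set Implicit Arguments. Unset Strict Implicit. Unset Printing Implicit Defensive.

(* Write G(C) for the joint entropy of X and of the X_S, S in C, and
   h(S) := H(X_S | X_(2^S - {S})).  Then
     psi(K) = (|K| - 1) I(X; X_emptyset) + H(X) - G(2^K) + sum_(S subset K) h(S).
   Every inequality needed comes from the nonnegativity of conditional mutual
   information, H(Y,Z,W) + H(W) <= H(Y,W) + H(Z,W), itself a consequence of
   ln t <= t - 1.  It makes G submodular on collections of sets, and it bounds
   the increase of G caused by adding a set S all of whose proper subsets are
   already present by h(S), so G(D) - G(C) <= sum_(S in D - C) h(S) for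
   down-closed D.  Monotonicity of psi follows since h >= 0 and I >= 0;
   supermodularity follows from the submodularity of G on 2^S, 2^T (whose
   meet is 2^(S cap T)), the bound for 2^S u 2^T inside 2^(S u T), and
   inclusion-exclusion for the sums of h. *)

Lemma ler_sum_subpred (R : numDomainType) (I : Type) (r : seq I) (p q : pred I)
    (F : I -> R) :
  (forall i, q i -> 0 <= F i) -> (forall i, p i -> q i) ->
  \sum_(i <- r | p i) F i <= \sum_(i <- r | q i) F i.
Proof.
move=> F_ge0 pq; rewrite [leRHS](bigID p) /=.
rewrite (eq_bigl p) => [|i]; last by apply/andb_idl/pq.
by rewrite lerDl sumr_ge0 // => i /andP[/F_ge0].
Qed.

Lemma sum_setUI (V : nmodType) (I : finType) (A B : {set I}) (F : I -> V) :
  \sum_(i in A :|: B) F i + \sum_(i in A :&: B) F i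
  = \sum_(i in A) F i + \sum_(i in B) F i.
Proof.
rewrite (@big_setID _ _ _ _ (A :|: B) B) (@big_setID _ _ _ _ A B).
rewrite (setIidPr (subsetUr A B)) setDUl setDv setU0.
by rewrite /= addrAC [RHS]addrC addrA.
Qed.

Lemma ln_le_subr1 (R : realType) (x : R) : 0 < x -> ln x <= x - 1.
Proof. by move=> x_gt0; rewrite -[in ln x](subrKC 1 x) le_ln1Dx // ltrBrDl subrr. Qed.

Section EquivalenceRel.
Variables (T : Type) (e : rel T).
Hypothesis eqv_e : equivalence_rel e.

Lemma equiv_refl : reflexive e.
Proof. by case/equivalence_relP: eqv_e. Qed.

Lemma equiv_ltrans : left_transitive e.
Proof. by case/equivalence_relP: eqv_e. Qed.

Lemma equiv_sym : symmetric e.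
Proof.
by move=> x y; apply/idP/idP => /equiv_ltrans <-; rewrite equiv_refl.
Qed.

Lemma equiv_trans : transitive e.
Proof. by move=> y x z /equiv_ltrans ->. Qed.

End EquivalenceRel.

Section Entropy.
Variables (R : realType) (Omega : finType) (P : Omega -> R).
Hypothesis P_ge0 : forall w, 0 <= P w.
Hypothesis P_sum1 : \sum_(w : Omega) P w = 1.

Lemma equiv_joint_rel (e1 e2 : rel Omega) :
  equivalence_rel e1 -> equivalence_rel e2 -> equivalence_rel (joint_rel e1 e2).
Proof.
move=> eqv1 eqv2; apply/equivalence_relP; split=> [w|w1 w2 /andP[h1 h2] w].
  by rewrite /joint_rel (equiv_refl eqv1) (equiv_refl eqv2).
by rewrite /joint_rel (equiv_ltrans eqv1 h1) (equiv_ltrans eqv2 h2).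
Qed.

Lemma equiv_rv_rel (T : eqType) (Y : Omega -> T) : equivalence_rel (rv_rel Y).
Proof. by move=> w1 w2 w; split=> [|/eqP h]; rewrite /rv_rel ?h. Qed.

Definition class_prob (e : rel Omega) (w : Omega) : R := \sum_(w' | e w w') P w'.

Lemma entE (e : rel Omega) : ent P e = - \sum_w P w * ln (class_prob e w).
Proof. by []. Qed.

Lemma class_prob_ge0 (e : rel Omega) w : 0 <= class_prob e w.
Proof. exact: sumr_ge0. Qed.

Lemma ge_class_prob (e : rel Omega) w : e w w -> P w <= class_prob e w.
Proof. by move=> eww; rewrite /class_prob (bigD1 w) //= lerDl sumr_ge0. Qed.

Lemma class_prob_gt0 (e : rel Omega) w : e w w -> 0 < P w -> 0 < class_prob e w.
Proof. by move=> /ge_class_prob le_cp Pw_gt0; apply: lt_le_trans le_cp. Qed.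

Lemma class_prob_subrel (e1 e2 : rel Omega) w :
  subrel e1 e2 -> class_prob e1 w <= class_prob e2 w.
Proof. by move=> sub12; apply: ler_sum_subpred => // w'; apply: sub12. Qed.

Lemma eq_class_prob (e : rel Omega) w1 w2 :
  equivalence_rel e -> e w1 w2 -> class_prob e w1 = class_prob e w2.
Proof. by move=> eqv /(equiv_ltrans eqv) h12; apply: eq_bigl. Qed.

Lemma eq_ent (e1 e2 : rel Omega) : e1 =2 e2 -> ent P e1 = ent P e2.
Proof.
move=> e12; rewrite !entE; congr (- _); apply: eq_bigr => w _.
by rewrite /class_prob (eq_bigl _ _ (e12 w)).
Qed.

Lemma ent_true : ent P (fun _ _ => true) = 0.
Proof. by rewrite /ent P_sum1 ln1 big1 ?oppr0 // => w _; rewrite mulr0. Qed.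

Lemma le_ent (e1 e2 : rel Omega) :
  reflexive e1 -> subrel e1 e2 -> ent P e2 <= ent P e1.
Proof.
move=> refl1 sub12; rewrite !entE lerN2; apply: ler_sum => w _.
have [->|Pw_neq0] := eqVneq (P w) 0; first by rewrite !mul0r.
have Pw_gt0 : 0 < P w by rewrite lt_def Pw_neq0 P_ge0.
have cp1_gt0 := class_prob_gt0 (refl1 w) Pw_gt0.
rewrite ler_wpM2l // ler_ln ?posrE ?class_prob_subrel //.
exact: lt_le_trans (class_prob_subrel _ sub12).
Qed.

Lemma cond_ent_ge0 (e1 e2 : rel Omega) :
  reflexive e1 -> reflexive e2 -> 0 <= cond_ent P e1 e2.
Proof.
move=> refl1 refl2; rewrite subr_ge0 le_ent // => [w|w w' /andP[]//].
by rewrite /joint_rel refl1 refl2.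
Qed.

Lemma sum_div_class_prob_le1 (e : rel Omega) (Q : pred Omega) w0 :
  equivalence_rel e -> (forall w, Q w -> e w0 w) ->
  \sum_(w | Q w) P w / class_prob e w <= 1.
Proof.
move=> eqv Q_class; rewrite (eq_bigr (fun w => P w / class_prob e w0)); last first.
  by move=> w /Q_class /(eq_class_prob eqv) ->.
rewrite -mulr_suml; have [->|cp_neq0] := eqVneq (class_prob e w0) 0.
  by rewrite invr0 mulr0.
rewrite ler_pdivrMr ?mul1r; last by rewrite lt_def cp_neq0 class_prob_ge0.
exact: ler_sum_subpred.
Qed.

Section Submodularity.
Variables e1 e2 e3 : rel Omega.
Hypotheses (eqv1 : equivalence_rel e1) (eqv2 : equivalence_rel e2)
  (eqv3 : equivalence_rel e3).
Let e13 := joint_rel e1 e3.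
Let e23 := joint_rel e2 e3.
Let e123 := joint_rel e1 e23.
Let a := class_prob e123.
Let b := class_prob e3.
Let c := class_prob e13.
Let d := class_prob e23.

Let eqv13 : equivalence_rel e13. Proof. exact: equiv_joint_rel. Qed.
Let eqv23 : equivalence_rel e23. Proof. exact: equiv_joint_rel. Qed.
Let eqv123 : equivalence_rel e123. Proof. exact: equiv_joint_rel. Qed.

Lemma sum_class13_le u : \sum_(w | e13 u w) P w * d w / a w <= b u.
Proof.
(* Each slice lies in a single e123-class, and is empty unless [e3 u v]. *)
have slice v : \sum_(w | e13 u w && e23 w v) P w / a w <= (e3 u v)%:R.
  case: (pickP (fun w => e13 u w && e23 w v)) => [w0 | Q0]; last first.
    by rewrite big_pred0 // ler0n.
  move=> /andP[/andP[e1uw0 e3uw0] /andP[e2w0v e3w0v]].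
  rewrite (equiv_trans eqv3 e3uw0 e3w0v).
  apply: (sum_div_class_prob_le1 (w0 := w0)) => //.
  move=> w /andP[/andP[e1uw e3uw] /andP[e2wv _]].
  apply/and3P; split.
  - by apply: (equiv_trans eqv1 (y := u)); first rewrite (equiv_sym eqv1).
  - by apply: (equiv_trans eqv2 (y := v)); last rewrite (equiv_sym eqv2).
  - by apply: (equiv_trans eqv3 (y := u)); first rewrite (equiv_sym eqv3).
under eq_bigr => w _ do rewrite mulrAC /d /class_prob big_distrr /=.
rewrite (exchange_big_dep predT) //= /b /class_prob [leRHS]big_mkcond /=.
apply: ler_sum => v _; rewrite -big_distrl /=.
apply: le_trans (ler_wpM2r (P_ge0 v) (slice v)) _.
by case: (e3 u v); rewrite ?mul1r ?mul0r.
Qed.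

Lemma sum_ratio_le1 : \sum_w P w * (c w * d w / (a w * b w)) <= 1.
Proof.
under eq_bigr => w _ do rewrite -[c w * _ / _]mulrA mulrCA /c /class_prob big_distrl /=.
rewrite (exchange_big_dep (P := xpredT) xpredT) //= -P_sum1; apply: ler_sum => u _.
rewrite (eq_bigl (fun w => e13 u w)) => [|w]; last exact: equiv_sym.
have -> : \sum_(w | e13 u w) P u * (P w * (d w / (a w * b w)))
          = P u / b u * \sum_(w | e13 u w) P w * d w / a w.
  rewrite big_distrr /=; apply: eq_bigr => w /andP[_ e3uw].
  by rewrite /b (eq_class_prob eqv3 e3uw) invfM; ring.
have [->|bu_neq0] := eqVneq (b u) 0; first by rewrite invr0 mulr0 mul0r.
rewrite -[leRHS](divfK bu_neq0) ler_wpM2l ?divr_ge0 ?class_prob_ge0 //.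
exact: sum_class13_le.
Qed.

Lemma ent_submod : ent P e123 + ent P e3 <= ent P e13 + ent P e23.
Proof.
have pointwise w : P w * ln (c w) + P w * ln (d w) - P w * ln (a w) - P w * ln (b w)
                   <= P w * (c w * d w / (a w * b w)) - P w.
  have [->|Pw_neq0] := eqVneq (P w) 0; first by rewrite !mul0r; lra.
  have Pw_gt0 : 0 < P w by rewrite lt_def Pw_neq0 P_ge0.
  have pos e : equivalence_rel e -> 0 < class_prob e w.
    by move=> eqv; apply: class_prob_gt0 (equiv_refl eqv w) Pw_gt0.
  have [a_gt0 b_gt0] := (pos _ eqv123, pos _ eqv3).
  have [c_gt0 d_gt0] := (pos _ eqv13, pos _ eqv23).
  have := ln_le_subr1 (divr_gt0 (mulr_gt0 c_gt0 d_gt0) (mulr_gt0 a_gt0 b_gt0)).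
  rewrite ln_div ?posrE ?mulr_gt0 // !lnM ?posrE // => le_ln.
  have := ler_wpM2l (ltW Pw_gt0) le_ln.
  by rewrite !(mulrDr, mulrBr) ?mulr1 /a /b /c /d; lra.
have := ler_sum (index_enum Omega) (fun w (_ : true) => pointwise w).
rewrite !sumrB !big_split /= P_sum1 !entE.
have := sum_ratio_le1; rewrite /a /b /c /d; lra.
Qed.

End Submodularity.

Lemma joint_rel_subl (e1 e2 : rel Omega) : subrel e1 e2 -> joint_rel e1 e2 =2 e1.
Proof. by move=> sub12 w w'; apply/andb_idr/sub12. Qed.

Lemma cond_ent_le_subrel (e1 e2 e3 : rel Omega) :
  equivalence_rel e1 -> equivalence_rel e2 -> equivalence_rel e3 ->
  subrel e2 e3 -> cond_ent P e1 e2 <= cond_ent P e1 e3.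
Proof.
move=> eqv1 eqv2 eqv3 sub23; have := ent_submod eqv1 eqv2 eqv3.
have eq123 : joint_rel e1 (joint_rel e2 e3) =2 joint_rel e1 e2.
  by move=> w w'; rewrite /joint_rel (andb_idr (@sub23 w w')).
by rewrite /cond_ent (eq_ent eq123) (eq_ent (joint_rel_subl sub23)); lra.
Qed.

Lemma cond_ent_true (e : rel Omega) : cond_ent P e (fun _ _ => true) = ent P e.
Proof.
by rewrite /cond_ent ent_true subr0 (eq_ent (joint_rel_subl (fun _ _ _ => erefl))).
Qed.

Lemma mutinf_ge0 (e1 e2 : rel Omega) :
  equivalence_rel e1 -> equivalence_rel e2 -> 0 <= mutinf P e1 e2.
Proof.
move=> eqv1 eqv2; have eqvT : equivalence_rel (fun _ _ : Omega => true) by [].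
have := cond_ent_le_subrel eqv1 eqv2 eqvT (fun _ _ _ => erefl).
by rewrite cond_ent_true /cond_ent /mutinf; lra.
Qed.

Section Collections.
Variables (L : nat) (A : finType) (B : {set 'I_L} -> finType).
Variables (X : Omega -> A) (Xs : forall K : {set 'I_L}, Omega -> B K).
Local Notation coll := (coll_rel Xs).
Local Notation rX := (rv_rel X).

Lemma equiv_coll_rel (C : {set {set 'I_L}}) : equivalence_rel (coll C).
Proof.
apply/equivalence_relP; split=> [w|w1 w2 /forall_inP eq12 w].
  exact/forall_inP.
by apply/forall_inP/forall_inP => eq_w K /[dup] KC /eq_w; rewrite (eqP (eq12 K KC)).
Qed.

Lemma coll_rel_subset (C D : {set {set 'I_L}}) :
  C \subset D -> subrel (coll D) (coll C).
Proof.
by move=> /subsetP subCD w w' /forall_inP eqD; apply/forall_inP => K /subCD /eqD.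
Qed.

Lemma coll_relU (C D : {set {set 'I_L}}) :
  joint_rel (coll C) (coll D) =2 coll (C :|: D).
Proof.
move=> w w'; rewrite /joint_rel.
apply/andP/forall_inP => [[/forall_inP eqC /forall_inP eqD] K|eqCD].
  by rewrite inE => /orP[/eqC|/eqD].
by split; apply/forall_inP => K KC; apply: eqCD; rewrite inE KC ?orbT.
Qed.

Lemma coll_rel1 (S : {set 'I_L}) : coll [set S] =2 rv_rel (Xs S).
Proof.
move=> w w'; apply/forall_inP/idP => [|eqS K]; first by apply; rewrite inE.
by rewrite inE => /eqP ->.
Qed.

Lemma coll_rel0 : coll set0 =2 (fun _ _ => true).
Proof. by move=> w w'; apply/forall_inP => K; rewrite inE. Qed.

Definition ent_with_X (C : {set {set 'I_L}}) : R := ent P (joint_rel (coll C) rX).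

Definition cond_ent_below (S : {set 'I_L}) : R :=
  cond_ent P (rv_rel (Xs S)) (coll (powerset S :\ S)).

Lemma equiv_with_X (C : {set {set 'I_L}}) : equivalence_rel (joint_rel (coll C) rX).
Proof. exact: equiv_joint_rel (equiv_coll_rel C) (equiv_rv_rel X). Qed.

Lemma ent_with_X_joint (C D : {set {set 'I_L}}) :
  ent P (joint_rel (coll C) (joint_rel (coll D) rX)) = ent_with_X (C :|: D).
Proof. by apply: eq_ent => w w'; rewrite /joint_rel -coll_relU /joint_rel andbA. Qed.

Lemma ent_with_X_setU1 (S : {set 'I_L}) (C : {set {set 'I_L}}) :
  powerset S :\ S \subset C -> ent_with_X (S |: C) - ent_with_X C <= cond_ent_below S.
Proof.
move=> below_S; rewrite -ent_with_X_joint.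
rewrite (eq_ent (e2 := joint_rel (rv_rel (Xs S)) (joint_rel (coll C) rX))); last first.
  by move=> w w'; rewrite /joint_rel coll_rel1.
apply: cond_ent_le_subrel (equiv_rv_rel _) (equiv_with_X C) (equiv_coll_rel _) _.
by move=> w w' /andP[/(coll_rel_subset below_S)].
Qed.

Lemma ent_with_X_submod (C D : {set {set 'I_L}}) :
  ent_with_X (C :|: D) + ent_with_X (C :&: D) <= ent_with_X C + ent_with_X D.
Proof.
have sub : subrel (joint_rel (coll D) rX) (joint_rel (coll (C :&: D)) rX).
  by move=> w w' /andP[/(coll_rel_subset (subsetIr C D)) eqCD eqX]; apply/andP.
have := cond_ent_le_subrel (equiv_coll_rel C) (equiv_with_X D) (equiv_with_X _) sub.
by rewrite /cond_ent !ent_with_X_joint (setUidPl (subsetIl C D)); lra.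
Qed.

Definition down_closed (D : {set {set 'I_L}}) :=
  forall S T : {set 'I_L}, T \in D -> S \subset T -> S \in D.

(* Add the members of [D :\: C] to [C] one at a time, each one of minimal
   cardinality, so that all its proper subsets are already present. *)
Lemma ent_with_X_sub_le (C D : {set {set 'I_L}}) : down_closed D -> C \subset D ->
  ent_with_X D - ent_with_X C <= \sum_(S in D :\: C) cond_ent_below S.
Proof.
move=> closedD; have [n] := ubnP #|D :\: C|; elim: n C => // n IH C.
rewrite ltnS => card_le subCD.
have [DC0|[S0 S0_new]] := set_0Vmem (D :\: C).
  have -> : D = C by apply/eqP; rewrite eqEsubset subCD andbT -setD_eq0 DC0.
  by rewrite subrr setDv big_set0.
case: (@arg_minnP _ S0 (fun S => S \in D :\: C) (fun S => #|S|) S0_new) => S S_new S_min.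
have [S_notin_C S_in_D] : S \notin C /\ S \in D by apply/andP; rewrite -in_setD.
have below_S : powerset S :\ S \subset C.
  apply/subsetP => T; rewrite !inE => /andP[neq_TS sub_TS]; apply: contraT => T_notin_C.
  have : (#|S| <= #|T|)%N by apply: S_min; rewrite inE T_notin_C (closedD _ _ S_in_D).
  by rewrite leqNgt proper_card // properEneq neq_TS.
have new_SC : D :\: (S |: C) = (D :\: C) :\ S by rewrite setDDl setUC.
have := IH (S |: C); rewrite new_SC subUset sub1set S_in_D subCD.
rewrite (cardsD1 S) S_new in card_le => /(_ card_le isT).
have := ent_with_X_setU1 below_S; rewrite (big_setD1 _ S_new) /=; lra.
Qed.

Local Notation I0 := (mutinf P rX (rv_rel (Xs set0))).

Lemma psiE (K : {set 'I_L}) : psi P X Xs K =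
  (#|K|%:R - 1) * I0 - (ent_with_X (powerset K) - ent P rX)
  + \sum_(S in powerset K) cond_ent_below S.
Proof. by []. Qed.

Lemma down_closed_powerset (T : {set 'I_L}) : down_closed (powerset T).
Proof. by move=> S U; rewrite !powersetE => /[swap]; apply: subset_trans. Qed.

Lemma cond_ent_below_ge0 (S : {set 'I_L}) : 0 <= cond_ent_below S.
Proof.
by apply: cond_ent_ge0; apply: equiv_refl; [apply: equiv_rv_rel|apply: equiv_coll_rel].
Qed.

Lemma psi0 : psi P X Xs set0 = 0.
Proof.
rewrite psiE cards0 mulr0n powerset0 big_set1.
have -> : cond_ent_below set0 = ent P (rv_rel (Xs set0)).
  rewrite -cond_ent_true /cond_ent_below /cond_ent powerset0 setDv (eq_ent coll_rel0).
  by congr (_ - _); apply: eq_ent => w w'; rewrite /joint_rel coll_rel0.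
have -> : ent_with_X [set set0] = ent P (joint_rel rX (rv_rel (Xs set0))).
  by apply: eq_ent => w w'; rewrite /joint_rel coll_rel1 andbC.
by rewrite /mutinf; lra.
Qed.

Lemma psi_proper_mono (S T : {set 'I_L}) : S \proper T -> psi P X Xs S <= psi P X Xs T.
Proof.
move=> /properP[sub_ST _]; rewrite !psiE.
have sub_PST : powerset S \subset powerset T by rewrite powersetS.
have := ent_with_X_sub_le (@down_closed_powerset T) sub_PST.
rewrite (@big_setID _ _ _ _ (powerset T) (powerset S)) /= (setIidPr sub_PST).
have I0_ge0 := mutinf_ge0 (equiv_rv_rel X) (equiv_rv_rel (Xs set0)).
have : (#|S|%:R - 1) * I0 <= (#|T|%:R - 1) * I0.
  by rewrite ler_wpM2r // lerD2r ler_nat subset_leq_card.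
have : 0 <= \sum_(U in powerset T :\: powerset S) cond_ent_below U.
  by apply: sumr_ge0 => U _; apply: cond_ent_below_ge0.
lra.
Qed.

Lemma psi_supermod (S T : {set 'I_L}) :
  psi P X Xs S + psi P X Xs T <= psi P X Xs (S :|: T) + psi P X Xs (S :&: T).
Proof.
rewrite !psiE.
have sub_U : powerset S :|: powerset T \subset powerset (S :|: T).
  by rewrite subUset !powersetS subsetUl subsetUr.
have := ent_with_X_sub_le (@down_closed_powerset (S :|: T)) sub_U.
have := ent_with_X_submod (powerset S) (powerset T).
have := sum_setUI (powerset S) (powerset T) cond_ent_below.
rewrite -powersetI.
rewrite (@big_setID _ _ _ _ (powerset (S :|: T)) (powerset S :|: powerset T)) /=.
rewrite (setIidPr sub_U).
have : (#|S :|: T|%:R - 1) * I0 + (#|S :&: T|%:R - 1) * I0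
       = (#|S|%:R - 1) * I0 + (#|T|%:R - 1) * I0.
  by rewrite -!mulrDl -[in LHS]addrACA -!natrD cardsUI natrD addrACA.
lra.
Qed.

End Collections.

End Entropy.

Theorem lemma2 (R : realType) (Omega : finType) (P : Omega -> R)
  (P_ge0 : forall w, 0 <= P w) (P_sum1 : \sum_(w : Omega) P w = 1)
  (L : nat) (L_gt0 : (0 < L)%N)
  (A : finType) (B : {set 'I_L} -> finType)
  (X : Omega -> A) (Xs : forall K : {set 'I_L}, Omega -> B K) :
  contra_polymatroid
    (fun r : 'I_L -> R =>
       forall K : {set 'I_L}, K != set0 ->
         psi P X Xs K <= rate_sum r K).
Proof.
exists (psi P X Xs); split=> //.
- exact: psi0.
- exact: psi_proper_mono.
- exact: psi_supermod.
Qed.
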